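(* Let $\mathcal{C}=(\mathcal{T},\mathcal{I},\mathcal{R})$ be an extraction context with thresholds \textit{minsupp} and \textit{minbond}. Then $\mathcal{RCPR}=\mathcal{CRCP}\cup\mathcal{MRCP}$, with each element $J$ recorded together with $\mathit{Supp}(\wedge J)$ and $\mathit{bond}(J)$, is an exact concise representation of the set $\mathcal{RCP}$ of rare correlated patterns.
   Context: An extraction context is a triple $\mathcal{C}=(\mathcal{T},\mathcal{I},\mathcal{R})$ with $\mathcal{T}$ a finite set of transactions, $\mathcal{I}$ a finite set of items and $\mathcal{R}\subseteq\mathcal{T}\times\mathcal{I}$. For a pattern $I\subseteq\mathcal{I}$: $\mathit{Supp}(\wedge I)=|\{t:\forall i\in I,(t,i)\in\mathcal{R}\}|$, $\mathit{Supp}(\vee I)=|\{t:\exists i\in I,(t,i)\in\mathcal{R}\}|$, and for nonempty $I$, $\mathit{bond}(I)=\mathit{Supp}(\wedge I)/\mathit{Supp}(\vee I)$ (with $\mathit{bond}(\emptyset)=+\infty$ by convention). $\mathcal{RCP}=\{I\subseteq\mathcal{I}:\mathit{Supp}(\wedge I)<\textit{minsupp},\ \mathit{bond}(I)\ge\textit{minbond}\}$. Closed rare correlated patterns: $\mathcal{CRCP}=\{I\in\mathcal{RCP}:\forall I_1\supsetneq I,\ \mathit{bond}(I)>\mathit{bond}(I_1)\}$. Minimal rare correlated patterns: $\mathcal{MRCP}=\{I\in\mathcal{RCP}:\forall I_1\subsetneq I,\ \mathit{bond}(I)<\mathit{bond}(I_1)\}$. A family $\mathcal{S}\subseteq\mathcal{RCP}$,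 with each $J\in\mathcal{S}$ recorded together with $\mathit{Supp}(\wedge J)$ and $\mathit{bond}(J)$, is an exact concise representation of $\mathcal{RCP}$ if, for every pattern $I\subseteq\mathcal{I}$, the recorded data $\{(J,\mathit{Supp}(\wedge J),\mathit{bond}(J)):J\in\mathcal{S}\}$ alone suffice to decide whether $I\in\mathcal{RCP}$ and, when $I\in\mathcal{RCP}$, to determine exactly $\mathit{Supp}(\wedge I)$ and $\mathit{bond}(I)$. *)

From mathcomp Require Import all_boot all_order all_algebra.
Set Implicit Arguments. Unset Strict Implicit. Unset Printing Implicit Defensive.
Import Order.TTheory GRing.Theory Num.Theory.
Local Open Scope ring_scope.

(* Extended bond values: [None] stands for +infinity, [Some q] for q : rat. *)
Definition ext_le (a b : option rat) : bool :=
  match a, b with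
  | _, None => true
  | None, Some _ => false
  | Some x, Some y => x <= y
  end.
Definition ext_lt (a b : option rat) : bool :=
  match a, b with
  | None, _ => false
  | Some _, None => true
  | Some x, Some y => x < y
  end.

Section Context.
Variables (T I : finType) (R : {set T * I}).

Definition suppAnd (X : {set I}) : nat :=
  #|[set t : T | [forall i in X, (t, i) \in R]]|.
Definition suppOr (X : {set I}) : nat :=
  #|[set t : T | [exists i in X, (t, i) \in R]]|.

(* bond(∅) = +∞ ; otherwise Supp(∧X)/Supp(∨X) (MathComp convention x/0 = 0). *)
Definition bond (X : {set I}) : option rat :=
  if X == set0 then None else Some ((suppAnd X)%:R / (suppOr X)%:R).

Variables (minsupp minbond : rat).

Definition RCP (X : {set I}) : bool :=
  ((suppAnd X)%:R < minsupp) && ext_le (Some minbond) (bond X).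

Definition CRCP (X : {set I}) : bool :=
  RCP X && [forall X1 : {set I}, (X \proper X1) ==> ext_lt (bond X1) (bond X)].

Definition MRCP (X : {set I}) : bool :=
  RCP X && [forall X1 : {set I}, (X1 \proper X) ==> ext_lt (bond X) (bond X1)].

Definition RCPR : {set {set I}} := [set X | CRCP X || MRCP X].

(* The recorded data {(J, Supp(∧J), bond(J)) : J ∈ S}, as a partial map keyed by J. *)
Definition recorded (S : {set {set I}}) : {set I} -> option (nat * option rat) :=
  fun J => if J \in S then Some (suppAnd J, bond J) else None.

End Context.

(* A family selector S (choosing, for each context, a family of patterns) is an
   exact concise representation of RCP if it is always included in RCP and a
   single decoding function, applied to the recorded data only, decides for
   every pattern whether it is in RCP and, if so, returns its Supp(∧) and bond. *)
Definition exact_concise_repr (I : finType) (minsupp minbond : rat)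
    (S : forall T : finType, {set T * I} -> {set {set I}}) : Prop :=
  exists decode : ({set I} -> option (nat * option rat)) -> {set I} ->
                  option (nat * option rat),
    forall (T : finType) (R : {set T * I}),
      (forall J, J \in S T R -> RCP R minsupp minbond J) /\
      (forall X : {set I},
         decode (recorded R (S T R)) X =
         if RCP R minsupp minbond X then Some (suppAnd R X, bond R X) else None).

(** Bond is antitone for inclusion, and along a chain X ⊆ Y equal bonds force
    equal conjunctive supports.  Hence RCP is convex (any pattern between two
    rare correlated ones is rare correlated), and every X ∈ RCP lies between
    a minimal pattern Y ⊆ X and a closed pattern Z ⊇ X of the same bond, both
    in RCPR.  Decoding: X ∈ RCP iff some recorded pattern lies below X and
    some above it; the recorded supersets of X then all have bond ≤ bond X
    with equality at Z, so any recorded superset of maximal bond has the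
    bond and the support of X. *)

From Pilot Require Import Defs.
From mathcomp Require Import all_boot all_order all_algebra.
From mathcomp Require Import zify.
Set Implicit Arguments. Unset Strict Implicit. Unset Printing Implicit Defensive.
Import Order.TTheory GRing.Theory Num.Theory.

Local Open Scope ring_scope.

Lemma ext_le_anti a b : ext_le a b -> ext_le b a -> a = b.
Proof.
case: a b => [x|] [y|] //= xy yx.
by congr Some; apply/eqP; rewrite eq_le xy yx.
Qed.

Lemma ext_le_trans a b c : ext_le a b -> ext_le b c -> ext_le a c.
Proof. case: a b c => [x|] [y|] [z|] //=; exact: le_trans. Qed.

Lemma ext_le_neq_lt a b : ext_le a b -> a != b -> ext_lt a b.
Proof.
case: a b => [x|] [y|] //= xy; rewrite lt_neqAle xy andbT.
by apply: contra => /eqP ->.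
Qed.

Section NatRatios.
Variables (F : numFieldType) (a' a b b' : nat).
Hypotheses (le_a'a : (a' <= a)%N) (le_bb' : (b <= b')%N).
Hypotheses (le_ab : (a <= b)%N) (le_a'b' : (a' <= b')%N).

Lemma ler_nat_ratio : a'%:R / b'%:R <= a%:R / b%:R :> F.
Proof.
have [->|a'_gt0] := posnP a'; first by rewrite mul0r divr_ge0 ?ler0n.
have b_gt0 : 0 < b%:R :> F by rewrite ltr0n; lia.
have b'_gt0 : 0 < b'%:R :> F by rewrite ltr0n; lia.
by rewrite ler_pdivrMr // mulrAC ler_pdivlMr // -!natrM ler_nat; nia.
Qed.

Lemma eq_nat_ratio : a'%:R / b'%:R = a%:R / b%:R :> F -> a' = a.
Proof.
have [a0|a_gt0] := posnP a; first lia.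
have b_neq0 : b%:R != 0 :> F by rewrite pnatr_eq0; lia.
have b'_neq0 : b'%:R != 0 :> F by rewrite pnatr_eq0; lia.
by move/eqP; rewrite eqr_div // -!natrM eqr_nat => /eqP; nia.
Qed.

End NatRatios.

Section Decoding.
Variable I : finType.
Implicit Types (rec : {set I} -> option (nat * option rat)) (X J : {set I}).

Definition max_bond_superset rec X J : bool :=
  if rec J is Some (_, b) then
    [forall (J' : {set I} | X \subset J'),
       if rec J' is Some (_, b') then ext_le b' b else true]
  else false.

Definition decode rec X : option (nat * option rat) :=
  if [exists J : {set I}, (J \subset X) && (rec J != None)] then
    obind rec [pick J : {set I} | (X \subset J) && max_bond_superset rec X J]
  else None.

End Decoding.

Section Context.
Variables (T I : finType) (R : {set T * I}).
Implicit Types X Y Z J : {set I}.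

Lemma suppAndS X Y : X \subset Y -> (suppAnd R Y <= suppAnd R X)%N.
Proof.
move=> sXY; apply/subset_leq_card/subsetP => t; rewrite !inE.
by move=> /forall_inP RY; apply/forall_inP => i /(subsetP sXY); apply: RY.
Qed.

Lemma suppOrS X Y : X \subset Y -> (suppOr R X <= suppOr R Y)%N.
Proof.
move=> sXY; apply/subset_leq_card/subsetP => t; rewrite !inE.
by case/exists_inP => i /(subsetP sXY) iY Rti; apply/exists_inP; exists i.
Qed.

Lemma suppAnd_le_suppOr X : X != set0 -> (suppAnd R X <= suppOr R X)%N.
Proof.
case/set0Pn => i iX; apply/subset_leq_card/subsetP => t; rewrite !inE.
by move/forall_inP/(_ i iX) => Rti; apply/exists_inP; exists i.
Qed.

Lemma bondS X Y : X \subset Y -> ext_le (bond R Y) (bond R X).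
Proof.
move=> sXY; rewrite /bond; have [//|X0] := eqVneq X set0; first by case: ifP.
have Y0 : Y != set0 by apply: contraNneq X0 => Y0; rewrite -subset0 -Y0.
rewrite (negbTE Y0) /=; apply: ler_nat_ratio;
  by [apply: suppAndS | apply: suppOrS | apply: suppAnd_le_suppOr].
Qed.

Lemma suppAnd_eq_bond X Y :
  X \subset Y -> bond R Y = bond R X -> suppAnd R Y = suppAnd R X.
Proof.
move=> sXY; rewrite /bond; have [->|X0] := eqVneq X set0.
  by case: ifP => // /eqP ->.
have Y0 : Y != set0 by apply: contraNneq X0 => Y0; rewrite -subset0 -Y0.
rewrite (negbTE Y0) => -[]; apply: eq_nat_ratio;
  by [apply: suppAndS | apply: suppOrS | apply: suppAnd_le_suppOr].
Qed.

Lemma bond_proper_lt X Y :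
  X \proper Y -> bond R Y != bond R X -> ext_lt (bond R Y) (bond R X).
Proof. by move/proper_sub/bondS; apply: ext_le_neq_lt. Qed.

Variables minsupp minbond : rat.
Local Notation RCP := (RCP R minsupp minbond).
Local Notation CRCP := (CRCP R minsupp minbond).
Local Notation MRCP := (MRCP R minsupp minbond).
Local Notation RCPR := (RCPR R minsupp minbond).
Local Notation rec := (recorded R RCPR).

Lemma RCP_between (J1 X J2 : {set I}) :
  J1 \subset X -> X \subset J2 -> RCP J1 -> RCP J2 -> RCP X.
Proof.
move=> sJ1X sXJ2 /andP[rare1 _] /andP[_ corr2]; apply/andP; split.
  by apply: le_lt_trans rare1; rewrite ler_nat suppAndS.
by apply: ext_le_trans corr2 _; apply: bondS.
Qed.

Lemma RCP_eq_bond X Y : X \subset Y -> bond R Y = bond R X -> RCP Y = RCP X.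
Proof.
by move=> sXY eq_bond; rewrite /Defs.RCP (suppAnd_eq_bond sXY eq_bond) eq_bond.
Qed.

Lemma RCPR_RCP J : J \in RCPR -> RCP J.
Proof. by rewrite inE => /orP[] /andP[]. Qed.

Lemma CRCP_closure X :
  RCP X -> exists Z, [/\ X \subset Z, bond R Z = bond R X & CRCP Z].
Proof.
move=> RCP_X.
have [Z maxZ sXZ] := maxset_exists (eqxx (bond R X) : [pred Z | bond R Z == bond R X] X).
have /eqP eq_bond := maxsetp maxZ.
exists Z; split=> //; apply/andP; split; first by rewrite (RCP_eq_bond sXZ).
apply/forall_inP => Z1 ltZZ1; apply: bond_proper_lt => //.
have sZZ1 := proper_sub ltZZ1; apply: contraTneq ltZZ1 => eq_bond1.
by rewrite (maxsetsup maxZ _ sZZ1) ?properxx //= eq_bond1 eq_bond.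
Qed.

Lemma MRCP_generator X :
  RCP X -> exists Y, [/\ Y \subset X, bond R Y = bond R X & MRCP Y].
Proof.
move=> RCP_X.
have [Y minY sYX] := minset_exists (eqxx (bond R X) : [pred Y | bond R Y == bond R X] X).
have /eqP eq_bond := minsetp minY.
exists Y; split=> //; apply/andP; split; first by rewrite -(RCP_eq_bond sYX).
apply/forall_inP => Y1 ltY1Y; apply: bond_proper_lt => //.
have sY1Y := proper_sub ltY1Y; apply: contraTneq ltY1Y => eq_bond1.
by rewrite (minsetinf minY _ sY1Y) ?properxx //= -eq_bond1 eq_bond.
Qed.

Lemma recorded_Some J p : rec J = Some p -> J \in RCPR /\ p = (suppAnd R J, bond R J).
Proof. by rewrite /recorded; case: ifP => // RCPR_J [<-]. Qed.

Lemma recorded_RCP J : rec J != None -> RCP J.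
Proof. by case eJ: (rec J) => [p|] // _; apply: RCPR_RCP; case: (recorded_Some eJ). Qed.

Lemma recorded_RCPR J : J \in RCPR -> rec J = Some (suppAnd R J, bond R J).
Proof. by rewrite /recorded => ->. Qed.

Lemma RCPR_closure X :
  RCP X -> exists Z, [/\ X \subset Z, bond R Z = bond R X & Z \in RCPR].
Proof.
case/CRCP_closure=> Z [sXZ eq_bond CRCP_Z].
by exists Z; split; rewrite // inE CRCP_Z.
Qed.

Lemma max_bond_superset_bond X J :
  RCP X -> X \subset J -> max_bond_superset rec X J -> bond R J = bond R X.
Proof.
move=> /RCPR_closure[Z [sXZ eq_bond RCPR_Z]] sXJ.
rewrite /max_bond_superset; case eJ: (rec J) => [[s b]|] //.
case: (recorded_Some eJ) => _ [_ ->] /forall_inP/(_ Z sXZ).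
rewrite recorded_RCPR // eq_bond => le_XJ.
exact: ext_le_anti (bondS sXJ) le_XJ.
Qed.

Lemma exists_max_bond_superset X :
  RCP X -> exists J, (X \subset J) && max_bond_superset rec X J.
Proof.
move=> /RCPR_closure[Z [sXZ eq_bond RCPR_Z]]; exists Z.
rewrite sXZ /max_bond_superset recorded_RCPR //; apply/forall_inP => J sXJ.
case eJ: (rec J) => [[s b]|] //.
by case: (recorded_Some eJ) => _ [_ ->]; rewrite eq_bond bondS.
Qed.

Lemma decode_recorded_RCPR X :
  decode rec X = if RCP X then Some (suppAnd R X, bond R X) else None.
Proof.
rewrite /decode; case: ifPn => [/exists_inP[J1 sJ1X /recorded_RCP RCP_J1] | no_sub].
  case: pickP => [J /andP[sXJ maxJ] | no_max] /=.
    case eJ: (rec J) => [p|]; last by rewrite /max_bond_superset eJ in maxJ.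
    have [/RCPR_RCP RCP_J ->] := recorded_Some eJ.
    have RCP_X := RCP_between sJ1X sXJ RCP_J1 RCP_J.
    have eq_bond := max_bond_superset_bond RCP_X sXJ maxJ.
    by rewrite RCP_X eq_bond (suppAnd_eq_bond sXJ eq_bond).
  case: ifP => // RCP_X; have [J maxJ] := exists_max_bond_superset RCP_X.
  by rewrite no_max in maxJ.
case: ifP => // /MRCP_generator[Y [sYX _ MRCP_Y]].
case/exists_inP: no_sub; exists Y => //.
by rewrite recorded_RCPR // inE MRCP_Y orbT.
Qed.

End Context.

Theorem mainTheorem4 (I : finType) (minsupp minbond : rat) :
  exact_concise_repr minsupp minbond
    (fun (T : finType) (R : {set T * I}) => RCPR R minsupp minbond).
Proof.
exists (@decode I) => T R; split=> [J|X]; first exact: RCPR_RCP.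
exact: decode_recorded_RCPR.
Qed.
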